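(* Let $m,a,b,t\in\mathbb{N}$ with $m\geq 3$, $a\geq 1$, $t\in\{2,\ldots,m-1\}$ and $(t-1)(am+1)<bm+t<t(am+1)$, and let $S=\langle m,\ am+1,\ bm+t\rangle$ (a MANS-semigroup with embedding dimension $3$). Then \[ \mathrm{g}(S)=\frac{qt(t-1)+r(r+1)}{2m}(am+1)+\frac{qt(q-1)+2q(r+1)}{2m}(bm+t)-\frac{m-1}{2}, \] where $q=\left\lfloor\frac{m-1}{t}\right\rfloor$ and $r=(m-1)\bmod t$.
   Context: $\mathbb{N}=\{0,1,2,\ldots\}$. $\langle A\rangle$ is the submonoid of $(\mathbb{N},+)$ generated by $A$; a numerical semigroup is a submonoid of $\mathbb{N}$ with finite complement. $\mathrm{g}(S)=|\mathbb{N}\setminus S|$ is the genus. A MANS-semigroup is a numerical semigroup with $w(1)<\cdots<w(\mathrm{m}(S)-1)$, where $\mathrm{m}(S)$ is the least element of $S\setminus\{0\}$ and $w(i)$ the least element of $S$ congruent to $i$ modulo $\mathrm{m}(S)$. $a\bmod b$ is the remainder of the division of $a$ by $b$. *)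

From mathcomp Require Import all_boot all_order all_algebra.
Set Implicit Arguments. Unset Strict Implicit. Unset Printing Implicit Defensive.

Definition gen_submonoid (A : seq nat) (x : nat) : Prop :=
  exists c : seq nat, size c = size A /\
    x = \sum_(i < size A) nth 0 c i * nth 0 A i.

Definition has_genus (S : nat -> Prop) (g : nat) : Prop :=
  exists s : seq nat, uniq s /\ (forall x, x \in s <-> ~ S x) /\ size s = g.

From mathcomp Require Import all_boot all_order all_algebra.
From mathcomp Require Import zify ring.
Import GRing.Theory Num.Theory.

Set Implicit Arguments.
Unset Strict Implicit.
Unset Printing Implicit Defensive.

(* Let A = am + 1 and B = bm + t.  An element c0 m + c1 A + c2 B of S is congruent
   to c1 + c2 t modulo m, and the inequalities (t - 1) A <= B <= t A say that,
   among such combinations, the cheapest one in each residue class j < m is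
   w(j) = (j mod t) A + (j div t) B.  Hence the Apery set of S with respect to m
   is {w(j) | j < m}, the gaps of S are the j + k m with j + k m < w(j), and
   Selmer's formula m g(S) = sum_j w(j) - m(m - 1)/2 applies.  The sums of
   j mod t and j div t over j < m are computed by cutting [0, m) into q blocks
   of length t and a final block of length r + 1. *)

Lemma gen_submonoid3P (n0 n1 n2 x : nat) :
  gen_submonoid [:: n0; n1; n2] x <->
  exists c0 c1 c2, x = c0 * n0 + c1 * n1 + c2 * n2.
Proof.
split.
- case=> c [+ ->]; case: c => [|c0 [|c1 [|c2 [|? ?]]]] //= _.
  by exists c0, c1, c2; rewrite !big_ord_recl big_ord0 /= addn0 !addnA.
- case=> c0 [c1 [c2 ->]]; exists [:: c0; c1; c2]; split => //.
  by rewrite !big_ord_recl big_ord0 /= addn0 !addnA.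
Qed.

Lemma has_genus_apery (S : nat -> Prop) (m : nat) (w : nat -> nat) :
  0 < m -> (forall j, j < m -> w j %% m = j) ->
  (forall x, S x <-> w (x %% m) <= x) ->
  has_genus S (\sum_(0 <= j < m) w j %/ m).
Proof.
move=> m_gt0 w_mod memS.
have gap_lt j k : j < m -> (j + k * m < w j) = (k < w j %/ m).
  move=> ltjm; rewrite {1}(divn_eq (w j) m) w_mod // addnC ltn_add2r.
  exact: ltn_pmul2r.
have modn_gap j k : j < m -> (j + k * m) %% m = j.
  by move=> ltjm; rewrite addnC modnMDl modn_small.
exists [seq j + k * m | j <- iota 0 m, k <- iota 0 (w j %/ m)]; split; last split.
- apply: allpairs_uniq_dep => [|j _|]; rewrite ?iota_uniq //.
  move=> [j1 k1] [j2 k2] /allpairsPdep[i1 [? [i1m _ /(congr1 (@projT1 _ _))/= ->]]].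
  move=> /allpairsPdep[i2 [? [i2m _ /(congr1 (@projT1 _ _))/= ->]]] /= eq12.
  rewrite !mem_iota !add0n /= in i1m i2m.
  have ei : i1 = i2 by rewrite -[LHS](modn_gap i1 k1 i1m) eq12 modn_gap.
  subst i2; congr existT; apply/eqP.
  by rewrite -(eqn_pmul2r m_gt0) -(eqn_add2l i1) eq12.
- move=> x; rewrite memS; split => [/allpairsPdep[j [k [jm km ->]]] | /negP].
  + rewrite !mem_iota !add0n /= in jm km.
    by apply/negP; rewrite -ltnNge modn_gap ?gap_lt.
  + have ltxm : x %% m < m by exact: ltn_pmod.
    rewrite -ltnNge {1}(divn_eq x m) addnC gap_lt // => ltk.
    apply/allpairsPdep; exists (x %% m), (x %/ m).
    by rewrite !mem_iota ltxm ltk addnC -divn_eq.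
- rewrite size_allpairs_dep sumnE big_map /index_iota subn0.
  by apply: eq_bigr => j _; rewrite size_iota.
Qed.

Lemma selmer_formula (m : nat) (w : nat -> nat) :
  (forall j, j < m -> w j %% m = j) ->
  m * \sum_(0 <= j < m) w j %/ m + \sum_(0 <= j < m) j = \sum_(0 <= j < m) w j.
Proof.
move=> w_mod; rewrite big_distrr -big_split; apply: eq_big_nat => j /andP[_ ltjm].
by rewrite /= [RHS](divn_eq (w j) m) w_mod // mulnC.
Qed.

Lemma double_sum_nat n : 2 * \sum_(0 <= i < n) i = n * (n - 1).
Proof.
elim: n => [|n IHn]; first by rewrite big_geq.
by rewrite big_nat_recr //= mulnDr IHn; nia.
Qed.

Lemma sum_nat_shift (F : nat -> nat) n s :
  \sum_(n <= i < n + s) F i = \sum_(0 <= j < s) F (n + j).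
Proof.
rewrite -{1}(add0n n) big_addn addKn.
by apply: eq_bigr => j _; rewrite addnC.
Qed.

Lemma sum_nat_blocks (F : nat -> nat) q t s :
  \sum_(0 <= i < q * t + s) F i =
  \sum_(0 <= k < q) \sum_(0 <= j < t) F (k * t + j) +
  \sum_(0 <= j < s) F (q * t + j).
Proof.
rewrite (@big_cat_nat _ _ _ (q * t)) ?leq_addr //; congr (_ + _).
  rewrite big_nat_mul; apply: eq_bigr => k _; rewrite mulSn addnC.
  exact: sum_nat_shift.
exact: sum_nat_shift.
Qed.

Lemma double_sum_modn q t s : s <= t ->
  2 * \sum_(0 <= i < q * t + s) i %% t = q * t * (t - 1) + s * (s - 1).
Proof.
move=> le_st; have modn_blk k j : j < t -> (k * t + j) %% t = j.
  by move=> ltjt; rewrite modnMDl modn_small.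
rewrite sum_nat_blocks.
have -> : \sum_(0 <= k < q) \sum_(0 <= j < t) (k * t + j) %% t =
          q * \sum_(0 <= j < t) j.
  transitivity (\sum_(0 <= k < q) \sum_(0 <= j < t) j).
    apply: eq_bigr => k _.
    by apply: eq_big_nat => j /andP[_ ltjt]; rewrite modn_blk.
  by rewrite sum_nat_const_nat subn0.
have -> : \sum_(0 <= j < s) (q * t + j) %% t = \sum_(0 <= j < s) j.
  by apply: eq_big_nat => j /andP[_ ltjs]; rewrite modn_blk // (leq_trans ltjs).
by rewrite mulnDr mulnCA !double_sum_nat mulnA.
Qed.

Lemma double_sum_divn q t s : 0 < t -> s <= t ->
  2 * \sum_(0 <= i < q * t + s) i %/ t = q * t * (q - 1) + 2 * q * s.
Proof.
move=> t_gt0 le_st; have divn_blk k j : j < t -> (k * t + j) %/ t = k.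
  by move=> ltjt; rewrite divnMDl // divn_small // addn0.
rewrite sum_nat_blocks.
have -> : \sum_(0 <= k < q) \sum_(0 <= j < t) (k * t + j) %/ t =
          t * \sum_(0 <= k < q) k.
  rewrite big_distrr; apply: eq_bigr => k _.
  transitivity (\sum_(0 <= j < t) k); last by rewrite sum_nat_const_nat subn0.
  by apply: eq_big_nat => j /andP[_ ltjt]; rewrite divn_blk.
have -> : \sum_(0 <= j < s) (q * t + j) %/ t = s * q.
  transitivity (\sum_(0 <= j < s) q); last by rewrite sum_nat_const_nat subn0.
  by apply: eq_big_nat => j /andP[_ ltjs]; rewrite divn_blk // (leq_trans ltjs).
rewrite mulnDr mulnCA double_sum_nat; ring.
Qed.

(* The w of the paper: by mem_apery, [apery t A B j] is the least element of
   <m, A, B> congruent to j < m modulo m, for A = am + 1 and B = bm + t. *)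
Definition apery (t A B n : nat) : nat := n %% t * A + n %/ t * B.

Lemma sum_apery (t A B n : nat) :
  \sum_(0 <= j < n) apery t A B j =
  A * \sum_(0 <= j < n) j %% t + B * \sum_(0 <= j < n) j %/ t.
Proof.
rewrite !big_distrr -big_split; apply: eq_bigr => j _.
by rewrite /apery !(mulnC _ A, mulnC _ B).
Qed.

Section AperyMonotone.

Variables (t A B : nat).
Hypothesis t_gt0 : 0 < t.

Lemma apery_homo : (t - 1) * A <= B -> {homo apery t A B : n p / n <= p}.
Proof.
move=> leAB; apply: (homo_leq leqnn leq_trans) => n.
rewrite /apery modnS divnS //; case: ifP => [dvd_t | _]; last first.
  by rewrite add0n leq_add2r leq_mul2r leqnSn orbT.
have r_last : (n %% t).+1 = t.
  apply/eqP; rewrite eqn_leq ltn_pmod //= dvdn_leq //.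
  by move: dvd_t; rewrite {1}(divn_eq n t) -addnS dvdn_addr ?dvdn_mull.
by rewrite mul0n add0n add1n mulSn leq_add2r; move: leAB; rewrite -{1}r_last subn1.
Qed.

Lemma apery_le_comb c1 c2 :
  B <= t * A -> apery t A B (c1 + c2 * t) <= c1 * A + c2 * B.
Proof.
move=> leBA; rewrite /apery (addnC c1) modnMDl divnMDl // {3}(divn_eq c1 t).
have := leq_mul (leqnn (c1 %/ t)) leBA; nia.
Qed.

End AperyMonotone.

Section AperySet.

Variables (m a b t : nat).
Hypotheses (m_gt0 : 0 < m) (t_gt0 : 0 < t).
Local Notation A := (a * m + 1).
Local Notation B := (b * m + t).
Hypotheses (leAB : (t - 1) * A <= B) (leBA : B <= t * A).

Lemma apery_expand j : apery t A B j = (j %% t * a + j %/ t * b) * m + j.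
Proof. by rewrite /apery {5}(divn_eq j t); ring. Qed.

Lemma apery_modn j : j < m -> apery t A B j %% m = j.
Proof. by move=> ltjm; rewrite apery_expand modnMDl modn_small. Qed.

Lemma mem_apery x :
  gen_submonoid [:: m; A; B] x <-> apery t A B (x %% m) <= x.
Proof.
rewrite gen_submonoid3P; split.
- case=> c0 [c1 [c2 ->]].
  have -> : (c0 * m + c1 * A + c2 * B) %% m = (c1 + c2 * t) %% m.
    by rewrite -[RHS](modnMDl (c0 + c1 * a + c2 * b)); congr (_ %% m); ring.
  apply: leq_trans (apery_homo t_gt0 leAB (leq_mod _ m)) _.
  apply: leq_trans (apery_le_comb t_gt0 _ _ leBA) _.
  by rewrite -addnA leq_addl.
- rewrite apery_expand; set K := _ * a + _ * b => le_wx.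
  have [d def_q] : exists d, x %/ m = d + K.
    exists (x %/ m - K); rewrite subnK // -(leq_pmul2r m_gt0).
    by move: le_wx; rewrite {2}(divn_eq x m) leq_add2r.
  exists d, (x %% m %% t), (x %% m %/ t).
  by rewrite {1}(divn_eq x m) def_q {1}(divn_eq (x %% m) t) /K; ring.
Qed.

End AperySet.

Lemma genus_formula_rat (g m P Q A B : nat) :
  0 < m -> 2 * m * g + m * (m - 1) = P * A + Q * B ->
  (g%:R : rat) = (P%:R / (2 * m)%:R * A%:R + Q%:R / (2 * m)%:R * B%:R
                  - (m - 1)%:R / 2%:R)%R.
Proof.
move=> m_gt0 /(congr1 (fun n => n%:R : rat)); rewrite !natrD !natrM => genus_eq.
have m_neq0 : (m%:R != 0 :> rat)%R by rewrite pnatr_eq0 -lt0n.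
have -> : (g%:R = (P%:R * A%:R + Q%:R * B%:R - m%:R * (m - 1)%:R) / (2 * m%:R) :> rat)%R.
  by rewrite -genus_eq; field.
by field; rewrite m_neq0 andbT -natrD pnatr_eq0 -lt0n addn_gt0 m_gt0.
Qed.

Theorem proposition3p13 (m a b t : nat) :
  3 <= m -> 1 <= a -> 2 <= t -> t <= m - 1 ->
  (t - 1) * (a * m + 1) < b * m + t -> b * m + t < t * (a * m + 1) ->
  let q := (m - 1) %/ t in
  let r := (m - 1) %% t in
  exists g : nat, has_genus (gen_submonoid [:: m; a * m + 1; b * m + t]) g /\
    (g%:R : rat) =
      (((q * t * (t - 1) + r * (r + 1))%N%:R / (2 * m)%N%:R) * (a * m + 1)%N%:R
      + ((q * t * (q - 1) + 2 * q * (r + 1))%N%:R / (2 * m)%N%:R) * (b * m + t)%N%:R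
      - ((m - 1)%N%:R / 2%:R))%R.
Proof.
(* Only 0 < m, 0 < t and the non-strict inequalities are needed. *)
move=> m_ge3 _ t_ge2 _ /ltnW leAB /ltnW leBA q r.
have m_gt0 : 0 < m by apply: leq_trans m_ge3.
have t_gt0 : 0 < t by apply: leq_trans t_ge2.
have m_blocks : m = q * t + r.+1 by rewrite addnS /q /r -divn_eq subn1 prednK.
have r_lt_t : r < t by rewrite /r ltn_pmod.
set A := a * m + 1 in leAB leBA *; set B := b * m + t in leAB leBA *.
set g := \sum_(0 <= j < m) apery t A B j %/ m.
exists g; split.
  apply: has_genus_apery => // [j|x]; [exact: apery_modn | exact: mem_apery].
set P := q * t * (t - 1) + r * (r + 1); set Q := q * t * (q - 1) + 2 * q * (r + 1).
have genus_eq : 2 * m * g + m * (m - 1) = P * A + Q * B.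
  rewrite -double_sum_nat -mulnA -mulnDr selmer_formula; last exact: apery_modn.
  rewrite sum_apery mulnDr !(mulnCA 2) {1 2}m_blocks double_sum_modn //.
  by rewrite double_sum_divn // subSS subn0 /P /Q; ring.
exact: genus_formula_rat.
Qed.
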